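(* Let $J\subseteq\mathbb{R}$ be an interval, $f:J\to\mathbb{R}$ convex, and $a,b\in J$. Then $$\int_0^1 f\big(a\nabla_\nu b\big)\,d\nu\le \frac{f(a)+f(b)}{2}-\int_0^1\big(1-|2\nu-1|\big)\left(\int_0^1\left(\frac{f\big(a\nabla_{\nu\lambda}b\big)+f\big(b\nabla_{(1-\nu)\lambda}a\big)}{2}-f\Big(a\nabla_{\frac{1+\lambda(2\nu-1)}{2}}b\Big)\right)d\lambda\right)d\nu .$$
   Context: For real $x,y$ and $\mu\in[0,1]$, $x\nabla_\mu y:=(1-\mu)x+\mu y$. *)

From Stdlib Require Import Reals.
From Coquelicot Require Import Coquelicot.
Open Scope R_scope.

Definition nabla (x mu y : R) : R := (1 - mu) * x + mu * y.

Definition is_interval (J : R -> Prop) : Prop :=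
  forall x y z, J x -> J z -> x <= y <= z -> J y.

Definition convex_on (J : R -> Prop) (f : R -> R) : Prop :=
  forall x y t, J x -> J y -> 0 <= t <= 1 ->
    f ((1 - t) * x + t * y) <= (1 - t) * f x + t * f y.

(* Put phi t := f (a \nabla_t b), a convex function on [0,1].  For nu <= 1/2, with
   x = nu lam and y = 1 - (1 - nu) lam, four chord inequalities around the midpoint
   of x and y combine into the pointwise bound
     phi nu + 2 nu ((phi x + phi y) / 2 - phi ((x + y) / 2)) <= (1 - nu) phi 0 + nu phi 1,
   and the case nu >= 1/2 follows by the reflection t |-> 1 - t.  Integrating in lam and
   then in nu, against the integral (phi 0 + phi 1) / 2 of the chord, gives the claim.
   The analytic work is integrability: phi is continuous on (0,1) with one-sided limits
   at the endpoints (its slopes are monotone), but it may jump there.  Replacing phi by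
   its continuous extension changes no Riemann integral over (0,1) and yields a
   uniformly continuous function, for which all the parametric integrals are continuous. *)

From Stdlib Require Import Reals Lra Classical.
From Coquelicot Require Import Coquelicot.
Open Scope R_scope.

Definition convex01 (phi : R -> R) : Prop :=
  forall u p v, 0 <= u -> u <= p -> p <= v -> v <= 1 ->
    (v - u) * phi p <= (v - p) * phi u + (p - u) * phi v.

Lemma nabla_in_interval (J : R -> Prop) (a b s : R) :
  is_interval J -> J a -> J b -> 0 <= s <= 1 -> J (nabla a s b).
Proof.
  intros HJ Ha Hb Hs; unfold nabla.
  destruct (Rle_dec a b).
  - apply (HJ a _ b Ha Hb); split; nra.
  - apply (HJ b _ a Hb Ha); split; nra.
Qed.

Lemma nabla_swap (a s b : R) : nabla b s a = nabla a (1 - s) b.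
Proof. unfold nabla; ring. Qed.

Lemma convex01_nabla (J : R -> Prop) (f : R -> R) (a b : R) :
  is_interval J -> convex_on J f -> J a -> J b -> convex01 (fun t => f (nabla a t b)).
Proof.
  intros HJ Hf Ha Hb u p v Hu Hup Hpv Hv.
  destruct (Req_dec u v) as [<-|Huv].
  { replace p with u by lra; lra. }
  set (t := (p - u) / (v - u)).
  assert (Et : (v - u) * t = p - u) by (unfold t; field; lra).
  assert (Ht : 0 <= t <= 1) by (split; nra).
  pose proof (Hf _ _ t (nabla_in_interval J a b u HJ Ha Hb ltac:(lra))
                (nabla_in_interval J a b v HJ Ha Hb ltac:(lra)) Ht) as Hchord.
  replace ((1 - t) * nabla a u b + t * nabla a v b) with (nabla a p b) in Hchord
    by (unfold nabla; nra).
  nra.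
Qed.

Lemma convex01_reflect (phi : R -> R) : convex01 phi -> convex01 (fun t => phi (1 - t)).
Proof.
  intros Hphi u p v Hu Hup Hpv Hv.
  pose proof (Hphi (1 - v) (1 - p) (1 - u) ltac:(lra) ltac:(lra) ltac:(lra) ltac:(lra)).
  lra.
Qed.

Definition tent (nu : R) : R := 1 - Rabs (2 * nu - 1).

(* The Jensen gap of [phi] at [nu * lam] and [1 - (1 - nu) * lam], whose midpoint is
   the third argument. *)
Definition gap (phi : R -> R) (nu lam : R) : R :=
  (phi (nu * lam) + phi (1 - (1 - nu) * lam)) / 2 - phi ((1 + lam * (2 * nu - 1)) / 2).

Lemma tent_reflect (nu : R) : tent (1 - nu) = tent nu.
Proof. unfold tent; split_Rabs; lra. Qed.

Lemma gap_reflect (phi : R -> R) (nu lam : R) :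
  gap (fun t => phi (1 - t)) (1 - nu) lam = gap phi nu lam.
Proof.
  unfold gap; cbv beta.
  replace (1 - (1 - (1 - (1 - nu)) * lam)) with (nu * lam) by ring.
  replace (1 - (1 + lam * (2 * (1 - nu) - 1)) / 2) with ((1 + lam * (2 * nu - 1)) / 2)
    by field.
  lra.
Qed.

Lemma convex01_gap_bound_le_half (phi : R -> R) (nu lam : R) :
  convex01 phi -> 0 <= nu <= 1 / 2 -> 0 <= lam <= 1 ->
  phi nu + tent nu * gap phi nu lam <= (1 - nu) * phi 0 + nu * phi 1.
Proof.
  intros Hphi Hnu Hlam.
  replace (tent nu) with (2 * nu) by (unfold tent; rewrite Rabs_left1 by lra; ring).
  destruct (Req_dec nu 0) as [->|Hnu0]; [lra|].
  unfold gap.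
  set (x := nu * lam); set (y := 1 - (1 - nu) * lam); set (m := (1 + lam * (2 * nu - 1)) / 2).
  assert (Hm : m = (x + y) / 2) by (unfold x, y, m; field).
  assert (Hx : 0 <= x <= nu) by (unfold x, m; split; nra).
  assert (Hy : m <= y <= 1) by (unfold y, m; split; nra).
  assert (Hnum : nu <= m < 1) by (unfold m; split; nra).
  pose proof (Hphi 0 x m ltac:(lra) ltac:(lra) ltac:(lra) ltac:(lra)) as Cx.
  pose proof (Hphi m y 1 ltac:(lra) ltac:(lra) ltac:(lra) ltac:(lra)) as Cy.
  pose proof (Hphi 0 nu m ltac:(lra) ltac:(lra) ltac:(lra) ltac:(lra)) as Cnu.
  pose proof (Hphi 0 m 1 ltac:(lra) ltac:(lra) ltac:(lra) ltac:(lra)) as Cm.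
  apply Rmult_le_compat_l with (r := nu * (1 - m)) in Cx; [|nra].
  apply Rmult_le_compat_l with (r := nu * m) in Cy; [|nra].
  apply Rmult_le_compat_l with (r := 1 - m) in Cnu; [|nra].
  apply Rmult_le_compat_l with (r := nu * (1 - y)) in Cm; [|nra].
  apply Rmult_le_reg_l with (m * (1 - m)); [nra|].
  clearbody x y m; subst m.
  lra.
Qed.

Lemma convex01_gap_bound (phi : R -> R) (nu lam : R) :
  convex01 phi -> 0 <= nu <= 1 -> 0 <= lam <= 1 ->
  phi nu + tent nu * gap phi nu lam <= (1 - nu) * phi 0 + nu * phi 1.
Proof.
  intros Hphi Hnu Hlam.
  destruct (Rle_dec nu (1 / 2)).
  { apply convex01_gap_bound_le_half; auto; lra. }
  pose proof (convex01_gap_bound_le_half _ (1 - nu) lam (convex01_reflect phi Hphi)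
                ltac:(lra) Hlam) as Hbound.
  rewrite gap_reflect, tent_reflect in Hbound; cbv beta in Hbound.
  rewrite Rminus_0_r, Rminus_diag in Hbound.
  replace (1 - (1 - nu)) with nu in Hbound by ring.
  lra.
Qed.

Lemma Rdiv_le_cross (a b c d : R) : 0 < b -> 0 < d -> a * d <= c * b -> a / b <= c / d.
Proof.
  intros Hb Hd H.
  apply Rmult_le_reg_r with (b * d); [nra|].
  replace (a / b * (b * d)) with (a * d) by (field; lra).
  replace (c / d * (b * d)) with (c * b) by (field; lra).
  exact H.
Qed.

Lemma nondecreasing_right_limit (s : R -> R) (r L : R) :
  0 < r ->
  (forall x y, 0 < x -> x <= y -> y < r -> s x <= s y) ->
  (forall x, 0 < x < r -> L <= s x) ->
  exists c, limit1_in s (fun t => 0 < t < r) c 0.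
Proof.
  intros Hr Hmono Hlow.
  set (E := fun y => exists t, 0 < t < r /\ y = - s t).
  assert (HEb : bound E).
  { exists (- L); intros y [t [Ht ->]]; specialize (Hlow t Ht); lra. }
  assert (HEi : exists y, E y) by (exists (- s (r / 2)), (r / 2); split; [lra|reflexivity]).
  destruct (completeness E HEb HEi) as [T [HTub HTlub]].
  exists (- T); intros eps Heps.
  assert (Ht0 : exists t0, 0 < t0 < r /\ s t0 < - T + eps).
  { apply NNPP; intros Hnot.
    enough (T <= T - eps) by lra.
    apply HTlub; intros y [t [Ht ->]].
    apply Rnot_lt_le; intros Hlt; apply Hnot; exists t; split; [exact Ht|lra]. }
  destruct Ht0 as [t0 [Ht0 Hst0]].
  exists t0; split; [lra|].
  intros t [[Ht Htr] Hdist]; simpl in *; unfold Rdist in *.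
  rewrite Rminus_0_r, Rabs_pos_eq in Hdist by lra.
  assert (- s t <= T) by (apply HTub; exists t; split; [lra|reflexivity]).
  assert (s t <= s t0) by (apply Hmono; lra).
  apply Rabs_def1; lra.
Qed.

(* The slope [s] to the midpoint is nondecreasing and bounded below, and
   [phi t = phi (1/2) - (1/2 - t) * s t]. *)
Lemma convex01_right_limit (phi : R -> R) :
  convex01 phi -> exists c, limit1_in phi (fun t => 0 < t < 1 / 2) c 0.
Proof.
  intros Hphi.
  set (s := fun t => (phi (1 / 2) - phi t) / (1 / 2 - t)).
  destruct (nondecreasing_right_limit s (1 / 2) (2 * (phi (1 / 2) - phi 0))) as [c Hc].
  - lra.
  - intros x y Hx Hxy Hy; unfold s; apply Rdiv_le_cross; try lra.
    pose proof (Hphi x y (1 / 2) ltac:(lra) Hxy ltac:(lra) ltac:(lra)); nra.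
  - intros x Hx; unfold s.
    replace (2 * (phi (1 / 2) - phi 0)) with ((phi (1 / 2) - phi 0) / (1 / 2)) by field.
    apply Rdiv_le_cross; try lra.
    pose proof (Hphi 0 x (1 / 2) ltac:(lra) ltac:(lra) ltac:(lra) ltac:(lra)); nra.
  - exists (phi (1 / 2) - (1 / 2 - 0) * c).
    apply limit1_ext with (fun t => phi (1 / 2) - (1 / 2 - t) * s t).
    { intros t Ht; unfold s; field; lra. }
    apply limit_minus.
    { exact (limit_free (fun _ => phi (1 / 2)) _ 0 0). }
    apply limit_mul; [|exact Hc].
    apply limit_minus; [exact (limit_free (fun _ => 1 / 2) _ 0 0)|apply lim_x].
Qed.

Lemma continuity_pt_eps_delta (h : R -> R) (z : R) :
  (forall eps, 0 < eps -> exists del, 0 < del /\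
     forall y, Rabs (y - z) < del -> Rabs (h y - h z) < eps) ->
  continuity_pt h z.
Proof.
  intros H eps Heps.
  destruct (H eps Heps) as [del [Hdel Hy]].
  exists del; split; [exact Hdel|].
  intros y [_ Hyz]; exact (Hy y Hyz).
Qed.

Lemma continuity_pt_lipschitz_at (h : R -> R) (z K r : R) :
  0 < r -> (forall y, Rabs (y - z) < r -> Rabs (h y - h z) <= K * Rabs (y - z)) ->
  continuity_pt h z.
Proof.
  intros Hr Hlip; apply continuity_pt_eps_delta; intros eps Heps.
  set (K' := Rabs K + 1).
  exists (Rmin r (eps / K')); split.
  { apply Rmin_pos; [lra|]; apply Rdiv_lt_0_compat; unfold K'; pose proof (Rabs_pos K); lra. }
  intros y Hy.
  pose proof (Rmin_l r (eps / K')); pose proof (Rmin_r r (eps / K')).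
  assert (HK' : 0 < K') by (unfold K'; pose proof (Rabs_pos K); lra).
  assert (Hyz : Rabs (y - z) * K' < eps).
  { apply Rmult_lt_reg_r with (/ K'); [apply Rinv_0_lt_compat; lra|].
    replace (Rabs (y - z) * K' * / K') with (Rabs (y - z)) by (field; lra).
    unfold Rdiv in *; lra. }
  pose proof (Hlip y ltac:(lra)); pose proof (Rle_abs K); pose proof (Rabs_pos (y - z)).
  unfold K' in *; nra.
Qed.

Lemma convex01_lipschitz_at (phi : R -> R) (p t : R) :
  convex01 phi -> 0 < p < 1 -> 0 <= t <= 1 ->
  Rabs (phi t - phi p)
  <= (Rabs ((phi p - phi 0) / p) + Rabs ((phi 1 - phi p) / (1 - p))) * Rabs (t - p).
Proof.
  intros Hphi Hp Ht.
  set (s0 := (phi p - phi 0) / p); set (s1 := (phi 1 - phi p) / (1 - p)).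
  assert (Es0 : p * s0 = phi p - phi 0) by (unfold s0; field; lra).
  assert (Es1 : (1 - p) * s1 = phi 1 - phi p) by (unfold s1; field; lra).
  assert (Hbetween : Rmin ((t - p) * s0) ((t - p) * s1) <= phi t - phi p
                     <= Rmax ((t - p) * s0) ((t - p) * s1)).
  { destruct (Rle_dec p t).
    - pose proof (Hphi p t 1 ltac:(lra) ltac:(lra) ltac:(lra) ltac:(lra)).
      pose proof (Hphi 0 p t ltac:(lra) ltac:(lra) ltac:(lra) ltac:(lra)).
      assert (phi t - phi p <= (t - p) * s1) by (apply Rmult_le_reg_l with (1 - p); nra).
      assert ((t - p) * s0 <= phi t - phi p) by (apply Rmult_le_reg_l with p; nra).
      split; [apply Rle_trans with ((t - p) * s0); [apply Rmin_l|lra]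
             |apply Rle_trans with ((t - p) * s1); [lra|apply Rmax_r]].
    - pose proof (Hphi 0 t p ltac:(lra) ltac:(lra) ltac:(lra) ltac:(lra)).
      pose proof (Hphi t p 1 ltac:(lra) ltac:(lra) ltac:(lra) ltac:(lra)).
      assert (phi t - phi p <= (t - p) * s0) by (apply Rmult_le_reg_l with p; nra).
      assert ((t - p) * s1 <= phi t - phi p) by (apply Rmult_le_reg_l with (1 - p); nra).
      split; [apply Rle_trans with ((t - p) * s1); [apply Rmin_r|lra]
             |apply Rle_trans with ((t - p) * s0); [lra|apply Rmax_l]]. }
  unfold Rmin, Rmax in Hbetween; destruct Rle_dec;
  split_Rabs; nra.
Qed.

Lemma convex01_continuity_pt (phi : R -> R) (p : R) :
  convex01 phi -> 0 < p < 1 -> continuity_pt phi p.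
Proof.
  intros Hphi Hp.
  eapply (continuity_pt_lipschitz_at phi p _ (Rmin p (1 - p))); [apply Rmin_pos; lra|].
  intros y Hy; pose proof (Rmin_l p (1 - p)); pose proof (Rmin_r p (1 - p)).
  apply convex01_lipschitz_at; auto.
  apply Rabs_def2 in Hy; lra.
Qed.

Definition clamp01 (t : R) : R := Rmax 0 (Rmin 1 t).

Definition ext01 (phi : R -> R) (c0 c1 t : R) : R :=
  if Rle_dec t 0 then c0 else if Rle_dec 1 t then c1 else phi t.

Lemma ext01_interior (phi : R -> R) (c0 c1 t : R) : 0 < t < 1 -> ext01 phi c0 c1 t = phi t.
Proof. intros Ht; unfold ext01; destruct (Rle_dec t 0), (Rle_dec 1 t); lra || reflexivity. Qed.

Lemma ext01_clamp01 (phi : R -> R) (c0 c1 t : R) :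
  ext01 phi c0 c1 (clamp01 t) = ext01 phi c0 c1 t.
Proof.
  unfold clamp01, Rmax, Rmin.
  destruct (Rle_dec 1 t); [destruct (Rle_dec 0 1)|destruct (Rle_dec 0 t)]; try lra;
  unfold ext01; repeat match goal with |- context [Rle_dec ?x ?y] => destruct (Rle_dec x y) end;
  lra || reflexivity.
Qed.

Lemma ext01_reflect (phi : R -> R) (c0 c1 t : R) :
  ext01 phi c0 c1 t = ext01 (fun s => phi (1 - s)) c1 c0 (1 - t).
Proof.
  unfold ext01.
  repeat match goal with |- context [Rle_dec ?x ?y] => destruct (Rle_dec x y) end;
  try lra; try reflexivity.
  now replace (1 - (1 - t)) with t by ring.
Qed.

Lemma continuity_pt_constant_left (h : R -> R) (r : R) :
  0 < r -> (forall t, t <= 0 -> h t = h 0) ->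
  limit1_in h (fun t => 0 < t < r) (h 0) 0 -> continuity_pt h 0.
Proof.
  intros Hr Hleft Hright; apply continuity_pt_eps_delta; intros eps Heps.
  destruct (Hright eps Heps) as [del [Hdel Hnear]]; simpl in Hnear; unfold Rdist in Hnear.
  exists (Rmin del r); split; [apply Rmin_pos; lra|].
  intros y Hy; rewrite Rminus_0_r in Hy.
  pose proof (Rmin_l del r); pose proof (Rmin_r del r).
  destruct (Rle_dec y 0).
  - rewrite Hleft, Rminus_diag, Rabs_R0 by lra; exact Heps.
  - apply Hnear; rewrite Rminus_0_r; apply Rabs_def2 in Hy; split; [lra|].
    rewrite Rabs_pos_eq; lra.
Qed.

Lemma ext01_continuity_pt_0 (phi : R -> R) (c0 c1 : R) :
  limit1_in phi (fun t => 0 < t < 1 / 2) c0 0 -> continuity_pt (ext01 phi c0 c1) 0.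
Proof.
  intros Hlim.
  assert (E0 : ext01 phi c0 c1 0 = c0)
    by (unfold ext01; destruct (Rle_dec 0 0); lra || reflexivity).
  apply (continuity_pt_constant_left _ (1 / 2)); [lra| |].
  - intros t Ht; rewrite E0; unfold ext01; destruct (Rle_dec t 0); lra || reflexivity.
  - rewrite E0; apply limit1_ext with phi; [|exact Hlim].
    intros t Ht; symmetry; apply ext01_interior; lra.
Qed.

Lemma ext01_continuity_pt (phi : R -> R) (c0 c1 z : R) :
  (forall p, 0 < p < 1 -> continuity_pt phi p) ->
  limit1_in phi (fun t => 0 < t < 1 / 2) c0 0 ->
  limit1_in (fun t => phi (1 - t)) (fun t => 0 < t < 1 / 2) c1 0 ->
  0 <= z <= 1 -> continuity_pt (ext01 phi c0 c1) z.
Proof.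
  intros Hint Hlim0 Hlim1 Hz.
  destruct (Req_dec z 0) as [->|Hz0]; [now apply ext01_continuity_pt_0|].
  destruct (Req_dec z 1) as [->|Hz1].
  - apply continuity_pt_ext with (fun t => ext01 (fun s => phi (1 - s)) c1 c0 (1 - t)).
    { intros t; symmetry; apply ext01_reflect. }
    apply (continuity_pt_comp (fun t => 1 - t)); [reg|].
    rewrite Rminus_diag; now apply ext01_continuity_pt_0.
  - apply (continuity_pt_locally_ext phi _ (Rmin z (1 - z))); [apply Rmin_pos; lra| |].
    + intros y Hy; unfold Rdist in Hy.
      pose proof (Rmin_l z (1 - z)); pose proof (Rmin_r z (1 - z)).
      symmetry; apply ext01_interior; apply Rabs_def2 in Hy; lra.
    + apply Hint; lra.
Qed.

Lemma uniform_continuity_clamp01 (h : R -> R) :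
  (forall t, h (clamp01 t) = h t) -> (forall z, 0 <= z <= 1 -> continuity_pt h z) ->
  uniform_continuity h (fun _ => True).
Proof.
  intros Hclamp Hcont eps.
  destruct (Heine h (fun z => 0 <= z <= 1) (compact_P3 0 1) Hcont eps) as [del Hdel].
  exists del; intros x y _ _ Hxy.
  rewrite <- (Hclamp x), <- (Hclamp y).
  apply Hdel; try (unfold clamp01, Rmax, Rmin; repeat destruct Rle_dec; lra).
  eapply Rle_lt_trans; [|exact Hxy].
  unfold clamp01, Rmax, Rmin; repeat destruct Rle_dec; split_Rabs; lra.
Qed.

Lemma convex01_uniformly_continuous_extension (phi : R -> R) :
  convex01 phi ->
  exists u, (forall t, 0 < t < 1 -> u t = phi t) /\ uniform_continuity u (fun _ => True).
Proof.
  intros Hphi.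
  destruct (convex01_right_limit phi Hphi) as [c0 Hc0].
  destruct (convex01_right_limit _ (convex01_reflect phi Hphi)) as [c1 Hc1].
  exists (ext01 phi c0 c1); split; [apply ext01_interior|].
  apply uniform_continuity_clamp01; [apply ext01_clamp01|].
  intros z Hz; apply ext01_continuity_pt; auto.
  intros p Hp; now apply convex01_continuity_pt.
Qed.

Section Integrability.

Variable u : R -> R.
Hypothesis Hu : uniform_continuity u (fun _ => True).

Lemma uniform_continuity_continuous (x : R) : continuous u x.
Proof.
  apply continuity_pt_filterlim, continuity_pt_eps_delta; intros eps Heps.
  destruct (Hu (mkposreal eps Heps)) as [del Hdel].
  exists del; split; [apply cond_pos|]; intros y Hy; now apply Hdel.
Qed.

Lemma continuous_comp_affine (c d z : R) : continuous (fun l => u (c + d * l)) z.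
Proof.
  apply (continuous_comp (fun l => c + d * l) u); [|apply uniform_continuity_continuous].
  apply (ex_derive_continuous (K := R_AbsRing) (V := R_NormedModule)); auto_derive; exact I.
Qed.

Lemma ex_RInt_gap (nu a b : R) : ex_RInt (gap u nu) a b.
Proof.
  apply (ex_RInt_continuous (V := R_CompleteNormedModule)); intros z _.
  apply (continuous_ext (fun l => (u (0 + nu * l) + u (1 + (nu - 1) * l)) * / 2
                                  - u (1 / 2 + (nu - 1 / 2) * l))).
  { intros l; unfold gap; rewrite Rplus_0_l.
    replace (1 + (nu - 1) * l) with (1 - (1 - nu) * l) by ring.
    replace (1 / 2 + (nu - 1 / 2) * l) with ((1 + l * (2 * nu - 1)) / 2) by field.
    reflexivity. }
  apply (continuous_minus (V := R_NormedModule)); [|apply continuous_comp_affine].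
  apply (continuous_mult (K := R_AbsRing) _ (fun _ => / 2)); [|apply continuous_const].
  apply (continuous_plus (V := R_NormedModule)); apply continuous_comp_affine.
Qed.

Lemma gap_close_in_nu (eps : R) : 0 < eps -> exists del, 0 < del /\
  forall nu nu0 lam, 0 <= lam <= 1 -> Rabs (nu - nu0) < del ->
    Rabs (gap u nu lam - gap u nu0 lam) < eps.
Proof.
  intros Heps.
  destruct (Hu (mkposreal (eps / 2) ltac:(lra))) as [[del Hdel] Hclose]; simpl in Hclose.
  exists del; split; [exact Hdel|]; intros nu nu0 lam Hlam Hnu.
  (* each of the three arguments of [u] moves by exactly [lam * (nu - nu0)] *)
  assert (Hmove : Rabs (lam * (nu - nu0)) < del).
  { rewrite Rabs_mult, Rabs_pos_eq by lra; pose proof (Rabs_pos (nu - nu0)); nra. }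
  pose proof (Hclose (nu * lam) (nu0 * lam) I I
                ltac:(now replace (nu * lam - nu0 * lam) with (lam * (nu - nu0)) by ring)).
  pose proof (Hclose (1 - (1 - nu) * lam) (1 - (1 - nu0) * lam) I I
                ltac:(now replace (1 - (1 - nu) * lam - (1 - (1 - nu0) * lam))
                        with (lam * (nu - nu0)) by ring)).
  pose proof (Hclose ((1 + lam * (2 * nu - 1)) / 2) ((1 + lam * (2 * nu0 - 1)) / 2) I I
                ltac:(now replace ((1 + lam * (2 * nu - 1)) / 2 - (1 + lam * (2 * nu0 - 1)) / 2)
                        with (lam * (nu - nu0)) by field)).
  unfold gap; split_Rabs; lra.
Qed.

Lemma RInt_gap_continuity_pt (nu0 : R) : continuity_pt (fun nu => RInt (gap u nu) 0 1) nu0.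
Proof.
  apply continuity_pt_eps_delta; intros eps Heps.
  destruct (gap_close_in_nu (eps / 2) ltac:(lra)) as [del [Hdel Hclose]].
  exists del; split; [exact Hdel|]; intros nu Hnu.
  rewrite <- (RInt_minus (V := R_CompleteNormedModule)) by apply ex_RInt_gap.
  eapply Rle_lt_trans; [|instantiate (1 := eps / 2); lra].
  replace (eps / 2) with ((1 - 0) * (eps / 2)) by ring.
  apply abs_RInt_le_const; [lra| |].
  - apply (ex_RInt_minus (V := R_NormedModule)); apply ex_RInt_gap.
  - intros lam Hlam; left; now apply Hclose.
Qed.

Lemma ex_RInt_tent_RInt_gap : ex_RInt (fun nu => tent nu * RInt (gap u nu) 0 1) 0 1.
Proof.
  apply (ex_RInt_continuous (V := R_CompleteNormedModule)); intros z _.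
  apply continuity_pt_filterlim, continuity_pt_mult; [|apply RInt_gap_continuity_pt].
  apply (continuity_pt_lipschitz_at _ _ 2 1); [lra|].
  intros y _; unfold tent; split_Rabs; lra.
Qed.

End Integrability.

Lemma RInt_chord (A0 A1 : R) : RInt (fun x => (1 - x) * A0 + x * A1) 0 1 = (A0 + A1) / 2.
Proof.
  set (F := fun x => A0 * (x - x * x / 2) + A1 * (x * x / 2)).
  assert (HF : is_RInt (fun x => (1 - x) * A0 + x * A1) 0 1 (minus (F 1) (F 0))).
  { apply (is_RInt_derive (V := R_CompleteNormedModule)).
    - intros x _; unfold F; auto_derive; [exact I|field].
    - intros x _.
      apply (ex_derive_continuous (K := R_AbsRing) (V := R_NormedModule)); auto_derive; exact I. }
  rewrite (is_RInt_unique _ _ _ _ HF); unfold F, minus, plus, opp; simpl; field.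
Qed.

Section Refinement.

Variables phi u : R -> R.
Hypothesis Hphi : convex01 phi.
Hypothesis Hext : forall t, 0 < t < 1 -> u t = phi t.
Hypothesis Hu : uniform_continuity u (fun _ => True).

Lemma gap_ext (nu lam : R) : 0 < nu < 1 -> 0 < lam < 1 -> gap u nu lam = gap phi nu lam.
Proof. intros Hnu Hlam; unfold gap; rewrite !Hext; try reflexivity; split; nra. Qed.

Lemma tent_RInt_gap_bound (nu : R) : 0 < nu < 1 ->
  u nu + tent nu * RInt (gap u nu) 0 1 <= (1 - nu) * phi 0 + nu * phi 1.
Proof.
  intros Hnu.
  replace (tent nu * RInt (gap u nu) 0 1) with (RInt (fun lam => tent nu * gap u nu lam) 0 1)
    by exact (RInt_scal (V := R_CompleteNormedModule) _ _ _ _ (ex_RInt_gap u Hu nu 0 1)).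
  assert (Hle : RInt (fun lam => tent nu * gap u nu lam) 0 1
                <= RInt (fun _ => (1 - nu) * phi 0 + nu * phi 1 - u nu) 0 1).
  { apply RInt_le; [lra| |apply ex_RInt_const|].
    - apply (ex_RInt_scal (V := R_NormedModule) (gap u nu)), (ex_RInt_gap u Hu).
    - intros lam Hlam; rewrite gap_ext, Hext by lra.
      pose proof (convex01_gap_bound phi nu lam Hphi ltac:(lra) ltac:(lra)); lra. }
  rewrite RInt_const in Hle; unfold scal in Hle; simpl in Hle; unfold mult in Hle; simpl in Hle.
  lra.
Qed.

Lemma RInt_tent_RInt_gap_bound :
  RInt u 0 1 + RInt (fun nu => tent nu * RInt (gap u nu) 0 1) 0 1 <= (phi 0 + phi 1) / 2.
Proof.
  assert (Hu_int : ex_RInt u 0 1).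
  { apply (ex_RInt_continuous (V := R_CompleteNormedModule)); intros z _.
    now apply uniform_continuity_continuous. }
  rewrite <- (RInt_plus (V := R_CompleteNormedModule)) by
    (exact Hu_int || exact (ex_RInt_tent_RInt_gap u Hu)).
  rewrite <- RInt_chord.
  apply RInt_le; [lra| | |].
  - apply (ex_RInt_plus (V := R_NormedModule)); [exact Hu_int|exact (ex_RInt_tent_RInt_gap u Hu)].
  - apply (ex_RInt_continuous (V := R_CompleteNormedModule)); intros z _.
    apply (ex_derive_continuous (K := R_AbsRing) (V := R_NormedModule)); auto_derive; exact I.
  - intros nu Hnu; now apply tent_RInt_gap_bound.
Qed.

End Refinement.

Theorem convex01_hermite_hadamard_refinement (phi : R -> R) :
  convex01 phi ->
  RInt phi 0 1 <= (phi 0 + phi 1) / 2 - RInt (fun nu => tent nu * RInt (gap phi nu) 0 1) 0 1.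
Proof.
  intros Hphi.
  destruct (convex01_uniformly_continuous_extension phi Hphi) as [u [Hext Hu]].
  rewrite (RInt_ext phi u), (RInt_ext (fun nu => tent nu * RInt (gap phi nu) 0 1)
                                      (fun nu => tent nu * RInt (gap u nu) 0 1)).
  - pose proof (RInt_tent_RInt_gap_bound phi u Hphi Hext Hu); lra.
  - rewrite Rmin_left, Rmax_right by lra; intros nu Hnu; f_equal.
    apply RInt_ext; rewrite Rmin_left, Rmax_right by lra; intros lam Hlam.
    symmetry; now apply gap_ext.
  - rewrite Rmin_left, Rmax_right by lra; intros t Ht; symmetry; now apply Hext.
Qed.

Theorem corollary2p15 (J : R -> Prop) (f : R -> R) (a b : R) :
  is_interval J -> convex_on J f -> J a -> J b ->
  RInt (fun nu => f (nabla a nu b)) 0 1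
  <= (f a + f b) / 2
     - RInt (fun nu => (1 - Rabs (2 * nu - 1)) *
          RInt (fun lam =>
             (f (nabla a (nu * lam) b) + f (nabla b ((1 - nu) * lam) a)) / 2
             - f (nabla a ((1 + lam * (2 * nu - 1)) / 2) b)) 0 1) 0 1.
Proof.
  intros HJ Hf Ha Hb.
  pose proof (convex01_hermite_hadamard_refinement _ (convex01_nabla J f a b HJ Hf Ha Hb))
    as Hrefine; cbv beta in Hrefine.
  replace (nabla a 0 b) with a in Hrefine by (unfold nabla; ring).
  replace (nabla a 1 b) with b in Hrefine by (unfold nabla; ring).
  eapply Rle_trans; [exact Hrefine|]; apply Req_le; f_equal.
  apply RInt_ext; intros nu _; f_equal; apply RInt_ext; intros lam _.
  unfold gap; now rewrite (nabla_swap a _ b).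
Qed.
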